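(* In the setting of the context, suppose $G_{xy}^{[1]}=1$ and $G_x\cong\mathrm{Frob}(20)\times C_4$. Then $G_e\cong C_4\wr C_2$.
   Context: $\mathcal{A}=(G_x,G_e,G_{xy})$ is a finite, primitive amalgam of degree $(5,2)$ (no nontrivial subgroup of $G_{xy}$ normal in both $G_x$ and $G_e$; $|G_x:G_{xy}|=5$, $|G_e:G_{xy}|=2$), $G=G_x*_{G_{xy}}G_e$ acts on the coset graph (5-valent tree) $\Gamma$, $x$ is the vertex with stabiliser $G_x$, $y$ the neighbour with $G_e$ the setwise stabiliser of $\{x,y\}$ and $G_x\cap G_y=G_{xy}$. $G_z^{[1]}$ is the pointwise stabiliser of $z$ and its neighbours, $G_{xy}^{[1]}=G_x^{[1]}\cap G_y^{[1]}$. $\mathrm{Frob}(20)$ is the Frobenius group of order 20. *)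

From mathcomp Require Import all_boot all_fingroup.
Set Implicit Arguments. Unset Strict Implicit. Unset Printing Implicit Defensive.
Local Open Scope group_scope.

(* A finite amalgam (G_x, G_e, G_xy) is modelled inside an ambient finite group:
   Gx, Ge subgroups of gT with Gx :&: Ge = Gxy. *)

Definition primitive_amalgam (gT : finGroupType) (Gx Ge Gxy : {group gT}) :=
  forall H : {group gT}, H \subset Gxy -> H <| Gx -> H <| Ge -> H :=: 1.

Definition amalgam52 (gT : finGroupType) (Gx Ge Gxy : {group gT}) :=
  [/\ Gxy :=: Gx :&: Ge, #|Gx : Gxy| = 5 & #|Ge : Gxy| = 2].

(* G_z^[1]: kernel of the action of the vertex stabiliser Gz on the neighbours
   of z, which are the cosets of the arc stabiliser Gxy in Gz; i.e. the core *)
Definition vertex_kernel (gT : finGroupType) (Gz Gxy : {set gT}) := gcore Gxy Gz.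

(* G_xy^[1] = G_x^[1] :&: G_y^[1], where G_y = G_x :^ t for t in Ge \ Gxy *)
Definition edge_kernel (gT : finGroupType) (Gx Gxy : {set gT}) (t : gT) :=
  vertex_kernel Gx Gxy :&: vertex_kernel (Gx :^ t) Gxy.

Definition isFrob20xC4 (gT : finGroupType) (G : {group gT}) : Prop :=
  G \isog Grp (a : b : c : (a ^+ 5 = 1, b ^+ 4 = 1, a ^ b = a ^+ 2,
                           c ^+ 4 = 1, [~ a, c] = 1, [~ b, c] = 1)).

(* C4 wr C2 = (C4 x C4) : C2, base generated by a and a^t *)
Definition isC4wrC2 (gT : finGroupType) (G : {group gT}) : Prop :=
  G \isog Grp (a : t : (a ^+ 4 = 1, t ^+ 2 = 1, [~ a, a ^ t] = 1)).

From mathcomp Require Import all_boot all_fingroup all_solvable zmodp zify.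
Set Implicit Arguments.
Unset Strict Implicit.
Unset Printing Implicit Defensive.
Local Open Scope group_scope.

(* G_x = <a, b, c>, with a, b, c as in the presentation, has order at most
   5 * 4 * 4 and maps onto C4 x C4, and 5 divides |G_x| = 5 |G_xy|, so
   |G_x| = 80.  Then G_xy is a Sylow 2-subgroup of G_x, hence conjugate to the
   abelian <b, c>, and it contains the central element c of order 4.  As c is
   central, c lies in G_x^[1] and c^t in G_y^[1]; since G_xy^[1] = 1 we get
   G_xy = <c> x <c^t>.  Writing t^2 = c^i (c^t)^j, commuting with t forces
   c^i = c^j, so s = t c^-i is an involution swapping c and c^t, and
   G_e = (<c> x <c^s>) ><| <s> is C4 wr C2. *)

Lemma conjg_commute {gT : finGroupType} {x y : gT} : commute x y -> x ^ y = x.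
Proof. by move/commgP/conjg_fixP. Qed.

Lemma Z4xZ4_homg_Frob20xC4 :
  [set: 'Z_4 * 'Z_4] \homg
    Grp (a : b : c : (a ^+ 5 = 1, b ^+ 4 = 1, a ^ b = a ^+ 2,
                      c ^+ 4 = 1, [~ a, c] = 1, [~ b, c] = 1)).
Proof.
pose y : 'Z_4 * 'Z_4 := (Zp1, 1); pose z : 'Z_4 * 'Z_4 := (1, Zp1).
apply/existsP; exists ((1, y), z); rewrite /= xpair_eqE.
apply/andP; split; last by vm_compute.
rewrite cycle1 joing1G /=.
have -> : <[y]> = setX [set: 'Z_4] 1.
  by rewrite -morphim_pairg1 [X in _ @* X]Zp_cycle morphim_cycle ?inE.
have -> : <[z]> = setX 1 [set: 'Z_4].
  by rewrite -morphim_pair1g [X in _ @* X]Zp_cycle morphim_cycle ?inE.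
rewrite (dprodWY (setX_dprod _ _)).
by apply/eqP/setP => -[u v]; rewrite !inE.
Qed.

Section Frob20xC4Generators.

Variables (gT : finGroupType) (G : {group gT}) (a b c : gT).
Hypotheses (defG : <[a]> <*> <[b]> <*> <[c]> = G)
  (a5 : a ^+ 5 = 1) (b4 : b ^+ 4 = 1) (ab : a ^ b = a ^+ 2)
  (c4 : c ^+ 4 = 1) (cac : [~ a, c] = 1) (cbc : [~ b, c] = 1).

Let ca : commute a c. Proof. exact/commgP/eqP. Qed.
Let cb : commute b c. Proof. exact/commgP/eqP. Qed.

Lemma frob_cent : G \subset 'C[c].
Proof. by rewrite -defG !join_subG !cycle_subG !cent1E ca cb !eqxx. Qed.

Lemma frob_compl_abelian : abelian (<[b]> <*> <[c]>).
Proof.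
by rewrite abelianY !cycle_abelian cent_cycle cycle_subG cent1E cb eqxx.
Qed.

Lemma frob_compl_sub : <[b]> <*> <[c]> \subset G.
Proof. by rewrite -defG -joingA joing_subr. Qed.

Lemma frob_mulg : G :=: <[a]> * (<[b]> <*> <[c]>).
Proof.
rewrite -defG -joingA norm_joinEr // join_subG !norms_cycle ab mem_cycle /=.
by rewrite (conjg_commute ca) cycle_id.
Qed.

Let card_mul_le (A B : {group gT}) : (#|(A * B)%g| <= #|A| * #|B|)%N.
Proof. by rewrite (mul_cardG A B) leq_pmulr ?cardG_gt0. Qed.

Lemma frob_compl_card_le : (#|<[b]> <*> <[c]>| <= #[b] * #[c])%N.
Proof.
by rewrite cent_joinEr ?card_mul_le // cent_cycle cycle_subG cent1E cb.
Qed.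

Lemma frob_card_le : (#|G| <= #[a] * #|<[b]> <*> <[c]>|)%N.
Proof. by rewrite frob_mulg card_mul_le. Qed.

Let order_le : [/\ #[a] <= 5, #[b] <= 4 & #[c] <= 4]%N.
Proof. by split; rewrite dvdn_leq // order_dvdn ?a5 ?b4 ?c4. Qed.

Lemma frob_card_le80 : (#|G| <= 80)%N.
Proof. have := frob_card_le; have := frob_compl_card_le; case: order_le; nia. Qed.

Lemma frob_card80 : #|G| = 80 -> #[c] = 4 /\ #|<[b]> <*> <[c]>| = 16.
Proof.
move=> oG; have := frob_card_le; have := frob_compl_card_le; rewrite oG.
by case: order_le; nia.
Qed.

Lemma frob_sub16 (X : {group gT}) :
  #|G| = 80 -> X \subset G -> #|X| = 16 -> abelian X /\ c \in X.
Proof.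
move=> oG sXG oX; have [_ oP] := frob_card80 oG.
have sylP : 2.-Sylow(G) (<[b]> <*> <[c]>).
  by rewrite pHallE frob_compl_sub oP oG p_part.
have sylX : 2.-Sylow(G) X by rewrite pHallE sXG oX oG p_part.
have [g Gg ->] := Sylow_trans sylP sylX.
have cgc : commute g c by apply/cent1P; apply: (subsetP frob_cent).
rewrite abelianJ frob_compl_abelian.
rewrite -[c in c \in _](conjg_commute (commute_sym cgc)) memJ_conjg.
by rewrite mem_gen // inE cycle_id orbT.
Qed.

End Frob20xC4Generators.

Lemma isFrob20xC4_card (gT : finGroupType) (G : {group gT}) :
  isFrob20xC4 G -> (5 %| #|G|)%N -> #|G| = 80.
Proof.
move=> isoG d5; have := isoG _ [set: 'Z_4 * 'Z_4]%G.
rewrite Z4xZ4_homg_Frob20xC4 => /homgP[f imf].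
have d16 : (16 %| #|G|)%N.
  have <- : #|[set: 'Z_4 * 'Z_4]| = 16%N by rewrite cardsT card_prod card_ord.
  by rewrite -imf dvdn_morphim.
case/existsP: (isoGrp_hom isoG) => -[[a b] c] /= /eqP[defG a5 b4 ab c4 cac cbc].
apply/eqP; rewrite eqn_leq (frob_card_le80 defG) //= dvdn_leq //.
by rewrite (@Gauss_dvd 16 5) ?d16.
Qed.

Lemma isFrob20xC4_central (gT : finGroupType) (G : {group gT}) :
    isFrob20xC4 G -> #|G| = 80 ->
  exists c, [/\ #[c] = 4, G \subset 'C[c]
              & forall X : {group gT}, X \subset G -> #|X| = 16 ->
                abelian X /\ c \in X].
Proof.
move=> isoG oG.
case/existsP: (isoGrp_hom isoG) => -[[a b] c] /= /eqP[defG a5 b4 ab c4 cac cbc].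
exists c; split; first by case: (frob_card80 defG a5 b4 ab c4 cac cbc oG).
  exact: frob_cent defG _ _.
by move=> X; apply: frob_sub16 defG a5 b4 ab c4 cac cbc X oG.
Qed.

Lemma order_eq2 (gT : finGroupType) (x : gT) : x ^+ 2 = 1 -> x != 1 -> #[x] = 2.
Proof.
move=> x2 ntx; have : #[x] != 1%N by rewrite order_eq1.
by have := order_dvdn x 2; rewrite x2 eqxx; case: #[x] => [|[|[]]].
Qed.

Lemma index2_expg2 (gT : finGroupType) (G H : {group gT}) x :
  H \subset G -> #|G : H| = 2 -> x \in G -> x ^+ 2 \in H.
Proof.
move=> sHG iGH Gx; have [Hx | notHx] := boolP (x \in H); first exact: groupX.
apply: contraT => notHx2.
have : x ^+ 2 \in H :* x by rewrite (rcoset_index2 sHG) ?inE ?notHx2 ?notHx ?groupX.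
by rewrite mem_rcoset expgS expg1 mulgK (negPf notHx).
Qed.

Lemma mem_vertex_kernel (gT : finGroupType) (Gz Gxy : {group gT}) c :
  Gz \subset 'C[c] -> c \in Gxy -> c \in vertex_kernel Gz Gxy.
Proof.
move=> cGz Gxy_c; rewrite -cycle_subG gcore_max ?cycle_subG //.
by rewrite (subset_trans cGz) // -cent_cycle cent_sub.
Qed.

Lemma edge_kernel_cycles (gT : finGroupType) (Gx Gxy : {group gT}) t c :
  Gx \subset 'C[c] -> c \in Gxy -> c ^ t \in Gxy ->
  <[c]> :&: <[c ^ t]> \subset edge_kernel Gx Gxy t.
Proof.
move=> cGx Gxy_c Gxy_ct; rewrite setISS // cycle_subG mem_vertex_kernel //.
by rewrite cent1J conjSg.
Qed.

Lemma TI_cycles_dprod (gT : finGroupType) (X : {group gT}) x y :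
    abelian X -> x \in X -> y \in X -> <[x]> :&: <[y]> = 1 ->
    (#[x] * #[y])%N = #|X| ->
  <[x]> \x <[y]> = X.
Proof.
move=> abX Xx Xy tiXY oXY.
rewrite dprodE ?(sub_abelian_cent2 abX) ?cycle_subG //.
apply/eqP; rewrite eqEcard mul_subG ?cycle_subG //=.
have := mul_cardG <[x]>%G <[y]>%G; rewrite /= tiXY cards1 muln1 => <-.
by rewrite -!orderE oXY.
Qed.

Lemma dprod_cycles_abelian (gT : finGroupType) (X : {group gT}) x y :
  <[x]> \x <[y]> = X -> abelian X.
Proof.
by move=> dpX; have [_ <- cXY _] := dprodP dpX; rewrite abelianM !cycle_abelian.
Qed.

Lemma dprod_cycles_mem (gT : finGroupType) (X : {group gT}) x y :
  <[x]> \x <[y]> = X -> x \in X /\ y \in X.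
Proof.
move/dprodW <-.
by rewrite (subsetP (mulG_subl _ _)) ?(subsetP (mulG_subr _ _)) ?cycle_id.
Qed.

Section WreathC4C2.

Variables (gT : finGroupType) (H X : {group gT}) (c : gT).
Hypotheses (sXH : X \subset H) (iXH : #|H : X| = 2).

Lemma swap_involution t :
    t \in H :\: X -> <[c]> \x <[c ^ t]> = X ->
  exists s, [/\ s \in H :\: X, s ^+ 2 = 1 & c ^ s = c ^ t].
Proof.
move=> /setDP[Ht notXt] dpX; set d := c ^ t.
have cX : {in X &, forall x y, commute x y}.
  by move=> x y Xx Xy; apply: (centsP (dprod_cycles_abelian dpX)).
have [_ defX _ tiCD] := dprodP dpX; have [Xc Xd] := dprod_cycles_mem dpX.
have t2X : t ^+ 2 \in X by apply: index2_expg2 iXH Ht.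
have dt : d ^ t = c by rewrite -conjgM -expg2 (conjg_commute (cX _ _ Xc t2X)).
have /mulsgP[_ _ /cycleP[i ->] /cycleP[j ->] t2E] : t ^+ 2 \in <[c]> * <[d]>.
  by rewrite defX.
have eq_ji : c ^+ j * d ^+ i = c ^+ i * d ^+ j.
  have : (t ^+ 2) ^ t = t ^+ 2 by rewrite conjXg conjg_commute.
  by rewrite t2E conjMg !conjXg dt -/d => <-; apply: cX; rewrite groupX.
have eq_ij : c ^+ i = c ^+ j.
  have : (c ^+ i)^-1 * c ^+ j \in <[c]> :&: <[d]>.
    rewrite inE groupM ?groupV ?mem_cycle //= (canRL (mulgK _) eq_ji).
    by rewrite -!mulgA mulKg groupM ?groupV ?mem_cycle.
  by rewrite tiCD inE -eq_mulVg1 => /eqP.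
pose w := c ^+ i.
have Xw : w \in X by rewrite groupX.
exists (t * w^-1); split.
- by rewrite inE groupMr ?groupV // notXt groupM ?groupV // (subsetP sXH).
- have t2w : t ^+ 2 = w * w ^ t by rewrite t2E -conjXg -eq_ij.
  have -> : (t * w^-1) ^+ 2 = t ^+ 2 * (w^-1) ^ t * w^-1.
    by rewrite !expg2 conjgE !mulgA mulgK.
  by rewrite t2w conjVg mulgK mulgV.
- by rewrite conjgM -/d (conjg_commute (cX _ _ Xd (groupVr Xw))).
Qed.

Lemma index2_involution_sdprod s :
  s \in H :\: X -> s ^+ 2 = 1 -> X ><| <[s]> = H.
Proof.
move=> /setDP[Hs notXs] s2.
have os : #[s] = 2 by rewrite order_eq2 //; apply: contraNneq notXs => ->.
have nXs : <[s]> \subset 'N(X).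
  by rewrite cycle_subG (subsetP (normal_norm (index2_normal sXH iXH))).
have tiXs : X :&: <[s]> = 1.
  by rewrite setIC prime_TIg -?orderE ?os // cycle_subG.
rewrite sdprodE //; apply/eqP; rewrite eqEcard mul_subG ?cycle_subG //=.
have := mul_cardG X <[s]>%G; rewrite /= tiXs cards1 muln1 => <-.
by rewrite -orderE os -iXH Lagrange.
Qed.

Section Involution.

Variable s : gT.
Hypotheses (HXs : s \in H :\: X) (s2 : s ^+ 2 = 1) (dpX : <[c]> \x <[c ^ s]> = X).

Let sdpX := index2_involution_sdprod HXs s2.
Let Hs : s \in H. Proof. by case/setDP: HXs. Qed.

Lemma involution_join : H :=: <[c]> <*> <[s]>.
Proof.
have [Xc _] := dprod_cycles_mem dpX.
apply/eqP; rewrite eqEsubset join_subG !cycle_subG Hs (subsetP sXH) //=.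
rewrite -(sdprodW sdpX) -(dprodW dpX) !mul_subG ?joing_subr // cycle_subG.
  by rewrite mem_gen // inE cycle_id.
by rewrite groupJ // mem_gen // inE cycle_id ?orbT.
Qed.

Hypothesis oc : #[c] = 4.

Lemma involution_morphism (rT : finGroupType) (x y : rT) :
    x ^+ 4 = 1 -> y ^+ 2 = 1 -> commute x (x ^ y) ->
  exists f : {morphism H >-> rT}, f c = x /\ f s = y.
Proof.
move=> x4 y2 cxxy; have [Xc Xcs] := dprod_cycles_mem dpX.
have dxc : (#[x] %| #[c])%N by rewrite oc order_dvdn x4.
have dxcs : (#[x ^ y] %| #[c ^ s])%N by rewrite !orderJ oc order_dvdn x4.
have cfX : eltm dxcs @* <[c ^ s]> \subset 'C(eltm dxc @* <[c]>).
  rewrite !morphim_cycle ?cycle_id //= !eltm_id cent_cycle cycle_subG cent1E.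
  by rewrite cxxy.
pose fX := dprodm dpX cfX.
have dys : (#[y] %| #[s])%N.
  rewrite order_dvdn (order_eq2 s2) ?y2 //.
  by apply: contraNneq (setDP HXs).2 => ->.
have actf : {in X & <[s]>, morph_act 'J 'J fX (eltm dys)}.
  move=> z _ Xz /cycleP[k ->] /=; rewrite eltmE.
  rewrite -(expg_mod k s2) -(expg_mod k y2) modn2.
  case: (odd k) => /=; last by rewrite !conjg1.
  rewrite !expg1.
  move: Xz; rewrite -(dprodW dpX) => /mulsgP[_ _ /cycleP[i ->] /cycleP[j ->] ->].
  rewrite conjMg !conjXg -conjgM -expg2 s2 conjg1.
  have ccs : commute (c ^ s) c by apply: (centsP (dprod_cycles_abelian dpX)).
  rewrite (commuteX2 i j ccs) /fX !dprodmE ?mem_cycle //= !eltmE.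
  rewrite conjMg !conjXg -conjgM -expg2 y2 conjg1.
  exact: commuteX2.
exists (sdprodm_morphism sdpX actf); split.
  by rewrite /= sdprodmEl //= /fX dprodmEl ?cycle_id //= eltm_id.
by rewrite /= sdprodmEr ?cycle_id //= eltm_id.
Qed.

Lemma involution_isC4wrC2 : isC4wrC2 H.
Proof.
have [Xc Xcs] := dprod_cycles_mem dpX; have Hc := subsetP sXH c Xc.
apply: intro_isoGrp.
  apply/existsP; exists (c, s); rewrite /= !xpair_eqE -involution_join eqxx.
  rewrite -oc expg_order s2 eqxx /=.
  by apply/commgP; apply: (centsP (dprod_cycles_abelian dpX)).
move=> rT K /existsP[[x y]] /= /eqP[defK x4 y2 /eqP/commgP cxxy].
have [f [fc fs]] := involution_morphism x4 y2 cxxy.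
apply/homgP; exists f.
rewrite [X in _ @* X]involution_join morphimY ?cycle_subG //.
by rewrite !morphim_cycle // fc fs.
Qed.

End Involution.

Lemma index2_isC4wrC2 t :
  #[c] = 4 -> t \in H :\: X -> <[c]> \x <[c ^ t]> = X -> isC4wrC2 H.
Proof.
move=> oc HXt dpX; have [s [HXs s2 cs]] := swap_involution HXt dpX.
by apply: (involution_isC4wrC2 HXs s2); rewrite ?cs.
Qed.

End WreathC4C2.

Theorem mainTheorem8 (gT : finGroupType) (Gx Ge Gxy : {group gT}) (t : gT) :
  amalgam52 Gx Ge Gxy ->
  primitive_amalgam Gx Ge Gxy ->
  t \in Ge :\: Gxy ->
  edge_kernel Gx Gxy t :=: 1 ->
  isFrob20xC4 Gx ->
  isC4wrC2 Ge.
Proof.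
move=> [defGxy iGx iGe] _ tGe ek isoGx.
have sGxyGx : Gxy \subset Gx by rewrite defGxy subsetIl.
have sGxyGe : Gxy \subset Ge by rewrite defGxy subsetIr.
have oGx5 : #|Gx| = (#|Gxy| * 5)%N by rewrite -iGx Lagrange.
have oGx : #|Gx| = 80 by apply: isFrob20xC4_card; rewrite // oGx5 dvdn_mull.
have [c [oc cGx sub16]] := isFrob20xC4_central isoGx oGx.
have [abGxy Gxy_c] : abelian Gxy /\ c \in Gxy by apply: sub16; lia.
have Gxy_ct : c ^ t \in Gxy.
  have nGxy := normal_norm (index2_normal sGxyGe iGe).
  by case/setDP: tGe => Ge_t _; rewrite memJ_norm ?(subsetP nGxy).
have tiC : <[c]> :&: <[c ^ t]> = 1.
  by apply/trivgP; rewrite -ek edge_kernel_cycles.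
apply: (index2_isC4wrC2 sGxyGe iGe oc tGe).
by apply: TI_cycles_dprod; rewrite // orderJ oc; lia.
Qed.
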